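(* Let $P$ be a finite graded bowtie-free poset of rank $n$ with $\hat0,\hat1$ and a good $\mathcal{H}_n(0)$ action $U_1,\dots,U_{n-1}$, and let $S\subseteq[n-1]$. Then every chain of $P$ whose elements other than $\hat0,\hat1$ have rank set exactly $S$ extends to exactly one maximal chain of $P$ whose descent set is contained in $S$.
   Context: Bowtie-free: no distinct $a,b,c,d$ with $a$ and $b$ each covering both $c$ and $d$. A good $\mathcal{H}_n(0)$ action is a family $U_1,\dots,U_{n-1}$ of maps on the set $\mathcal{M}(P)$ of maximal chains with: (1) $U_i(\mathfrak m)$ agrees with $\mathfrak m$ except possibly at rank $i$; (2) $U_i^2=U_i$; (3) $U_iU_j=U_jU_i$ for $|i-j|\ge2$; (4) $U_iU_{i+1}U_i=U_{i+1}U_iU_{i+1}$; (5) $\omega F_P(x)=\mathrm{ch}(\chi_P)$, where $\chi_P$ is the character of the representation of the 0-Hecke algebra $\mathcal{H}_n(0)$ on $\mathbb{C}\mathcal{M}(P)$ with $T_i$ acting as $-U_i$; $F_P(x)=\sum x_1^{\mathrm{rk}(t_0,t_1)}\cdots x_k^{\mathrm{rk}(t_{k-1},t_k)}$ over multichains $\hat0=t_0\le\cdots\le t_{k-1}<t_k=\hat1$; $L_{S,n}=\sum_{1\le i_1\le\cdots\le i_n,\ i_j<i_{j+1}\ (j\in S)}x_{i_1}\cdots x_{i_n}$; $\omega(L_{S,n})=L_{[n-1]\setminus S,n}$; $\mathrm{ch}$ linear with $\mathrm{ch}(\chi_S)=L_{S,n}$ for $\chi_S$ the character of the one-dimensional representation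 $T_i\mapsto-1$ ($i\in S$), $T_i\mapsto0$ ($i\notin S$). The descent set of a maximal chain $\mathfrak m$ is $\{i\in[n-1]:U_i(\mathfrak m)\ne\mathfrak m\}$. *)

From mathcomp Require Import all_boot all_order all_algebra.
Set Implicit Arguments. Unset Strict Implicit. Unset Printing Implicit Defensive.
Import Order.TTheory GRing.Theory.

Section Poset.
Local Open Scope order_scope.
Context {disp : Order.disp_t} {P : finTBPOrderType disp}.

Definition covers (x y : P) : bool :=
  (x < y) && ~~ [exists z : P, (x < z) && (z < y)].

Definition graded_rank (rk : P -> nat) (n : nat) : Prop :=
  [/\ rk \bot = 0%N, rk \top = n & forall x y, covers x y -> rk y = (rk x).+1].

Definition bowtie_free : Prop :=
  ~ exists a b c d : P,
      [/\ uniq [:: a; b; c; d],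
          covers c a, covers d a, covers c b & covers d b].

Definition chainb (c : {set P}) : bool :=
  [forall x in c, forall y in c, (x <= y) || (y <= x)].

Definition maxchainb (m : {set P}) : bool :=
  chainb m && [forall x, (x \notin m) ==> ~~ chainb (x |: m)].

Definition maxchains : {set {set P}} := [set m | maxchainb m].

(* coefficient of the monomial x_1^{a_1} ... x_k^{a_k} (k = size a) in F_P:
   number of multichains 0hat = t_0 <= ... <= t_{k-1} < t_k = 1hat with
   rk(t_{i-1},t_i) = a_i. *)
Definition F_coef (rk : P -> nat) (a : seq nat) : nat :=
  #|[set t : {ffun 'I_(size a).+1 -> P} |
     [&& 0 < size a,
         t ord0 == \bot,
         t ord_max == \top,
         [forall i : 'I_(size a),
            (t (widen_ord (leqnSn _) i) <= t (lift ord0 i)) &&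
            (rk (t (lift ord0 i)) == rk (t (widen_ord (leqnSn _) i)) + nth 0 a i)%N] &
         (t (inord (size a).-1) < t ord_max)]]|.

(* Descent set of a maximal chain, as a subset of [n-1] (elements of 'I_n
   with positive value). *)
Definition descents (n : nat) (U : nat -> {set P} -> {set P}) (m : {set P})
  : {set 'I_n} := [set i : 'I_n | (0 < val i)%N && (U (val i) m != m)].

Definition rankset (n : nat) (rk : P -> nat) (c : {set P}) : {set 'I_n} :=
  [set i : 'I_n | [exists x in c, [&& x != \bot, x != \top & rk x == val i]]].

End Poset.

(* [n-1] as a subset of 'I_n *)
Definition posI (n : nat) : {set 'I_n} := [set i : 'I_n | 0 < val i].

(* coefficient of x_1^{a_1}...x_k^{a_k} in the fundamental quasisymmetric
   function L_{S,n}: number of weakly increasing i_1 <= ... <= i_n with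
   i_j < i_{j+1} for j in S, having exponent vector a (values i_j - 1 are
   encoded in 'I_k). *)
Definition L_coef (n : nat) (S : {set 'I_n}) (a : seq nat) : nat :=
  #|[set f : {ffun 'I_n -> 'I_(size a)} |
     [&& [forall i : 'I_n, forall j : 'I_n, (i <= j)%N ==> (f i <= f j)%N],
         [forall i : 'I_n, forall j : 'I_n,
            ((val j == (val i).+1) && (j \in S)) ==> (f i < f j)%N] &
         [forall v : 'I_(size a), #|[set j | f j == v]| == nth 0 a v]]]|.

(* omega on degree n: L_{S,n} |-> L_{[n-1] \ S, n} *)
Definition L_compl (n : nat) (S : {set 'I_n}) : {set 'I_n} := posI n :\: S.

(* the one-dimensional character chi_S evaluated at T_{w_1} ... T_{w_k}:
   T_i |-> -1 if i in S, 0 otherwise *)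
Definition chiS (n : nat) (S : {set 'I_n}) (w : seq nat) : int :=
  \prod_(i <- w) (if [exists j in S, val j == i] then (-1)%R else 0%R).

Section Action.
Local Open Scope order_scope.
Context {disp : Order.disp_t} {P : finTBPOrderType disp}.

(* U_w = U_{w_1} o ... o U_{w_k}, the action of T_{w_1}...T_{w_k} up to sign *)
Definition Uword (U : nat -> {set P} -> {set P}) (w : seq nat) :=
  foldr (fun i f => U i \o f) id w.

(* the character chi_P of H_n(0) on C M(P) (T_i acting as -U_i), evaluated at
   T_{w_1} ... T_{w_k}: the trace on the basis M(P). *)
Definition chiP (U : nat -> {set P} -> {set P}) (w : seq nat) : int :=
  ((-1) ^+ size w * (Posz #|[set m in (maxchains : {set {set P}}) | Uword U w m == m]|))%R.

Definition good_action (n : nat) (rk : P -> nat)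
  (U : nat -> {set P} -> {set P}) : Prop :=
  [/\ [/\
      forall i m, (0 < i < n)%N -> maxchainb m -> maxchainb (U i m),
      forall i m x, (0 < i < n)%N -> maxchainb m -> rk x != i ->
        (x \in U i m) = (x \in m),
      forall i m, (0 < i < n)%N -> maxchainb m -> U i (U i m) = U i m,
      forall i j m, (0 < i < n)%N -> (0 < j < n)%N ->
        ((i.+2 <= j)%N || (j.+2 <= i)%N) -> maxchainb m ->
        U i (U j m) = U j (U i m) &
      forall i m, (0 < i)%N -> (i.+1 < n)%N -> maxchainb m ->
        U i (U i.+1 (U i m)) = U i.+1 (U i (U i.+1 m))] &
      (* (5)  omega F_P = ch(chi_P):
         chi_P = sum_S c_S chi_S (as functions on H_n(0), checked on the
         spanning words T_{w_1}...T_{w_k}), so ch(chi_P) = sum_S c_S L_{S,n};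
         F_P = sum_S d_S L_{S,n}, so omega F_P = sum_S d_S L_{[n-1]\S,n};
         equality of power series is coefficientwise on monomials
         x_1^{a_1}...x_k^{a_k} (a = [::] or last a <> 0). *)
      exists (c d : {set 'I_n} -> int),
        [/\ forall w : seq nat, all (fun i => (0 < i < n)%N) w ->
              chiP U w = (\sum_(S : {set 'I_n} | S \subset posI n) c S * chiS S w)%R,
            forall a : seq nat, last 1%N a != 0%N ->
              (Posz (F_coef rk a)) =
              (\sum_(S : {set 'I_n} | S \subset posI n) d S * (Posz (L_coef S a)))%R &
            forall a : seq nat, last 1%N a != 0%N ->
              (\sum_(S : {set 'I_n} | S \subset posI n) d S * (Posz (L_coef (L_compl S) a)))%R =
              (\sum_(S : {set 'I_n} | S \subset posI n) c S * (Posz (L_coef S a)))%R]].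

End Action.

From mathcomp Require Import all_boot all_order all_algebra zify.
Set Implicit Arguments. Unset Strict Implicit. Unset Printing Implicit Defensive.
Import Order.TTheory GRing.Theory.

(* Let J = [n-1] \ S.  By the 0-Hecke relations, the word of the longest
   element of the parabolic subgroup generated by J acts on maximal chains as
   an operator projS whose image is fixed by every U_j, j in J, i.e. consists of
   chains with descent set in S, and which keeps every element whose rank is
   not in J.  Applying projS to any maximal chain through c gives existence.

   For uniqueness, restrict maximal chains to the ranks {0} u S u {n}: this
   maps the chains with descents in S onto the multichains counted by the
   coefficient of x^alpha(S) in F_P, surjectively thanks to projS.  Evaluating
   the character condition (5) at the longest word of J, and inverting it on
   the boolean lattice of subsets of [n-1], shows that both sets have the same
   size, so the restriction is injective; two chains with descents in S
   containing c have the same restriction, hence coincide. *)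

Section Chains.
Local Open Scope order_scope.
Context {disp : Order.disp_t} {P : finTBPOrderType disp}.
Implicit Types (c m : {set P}) (x y : P).

Lemma chainP c : reflect {in c &, forall x y, (x <= y) || (y <= x)} (chainb c).
Proof.
apply: (iffP forallP) => [H x y xc yc | H x].
  by move: (H x); rewrite xc => /forallP /(_ y); rewrite yc.
by apply/implyP => xc; apply/forallP => y; apply/implyP; apply: H.
Qed.

Lemma maxchain_chain m : maxchainb m -> chainb m.
Proof. by case/andP. Qed.

Lemma maxchain_mem m x :
  maxchainb m -> {in m, forall y, (x <= y) || (y <= x)} -> x \in m.
Proof.
case/andP => /chainP m_chain /forallP m_max x_cmp; apply: contraT => xNm.
have := m_max x; rewrite xNm /= => /negP []; apply/chainP.
move=> a b /setU1P [-> | am] /setU1P [-> | bm]; rewrite ?lexx //.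
- exact: x_cmp.
- by rewrite orbC x_cmp.
- exact: m_chain.
Qed.

Lemma maxchain_bot m : maxchainb m -> \bot \in m.
Proof. by move=> m_max; apply: maxchain_mem => // y _; rewrite le0x. Qed.

Lemma maxchain_top m : maxchainb m -> \top \in m.
Proof. by move=> m_max; apply: maxchain_mem => // y _; rewrite lex1 orbT. Qed.

Lemma maxchain_exists c : chainb c -> exists2 m, maxchainb m & c \subset m.
Proof.
move=> c_chain; pose ext m := chainb m && (c \subset m).
have [m /andP [m_chain cm] m_big] := @arg_maxnP _ c ext (fun m => #|m|)
  (introT andP (conj c_chain (subxx c))).
exists m => //; rewrite /maxchainb m_chain; apply/forallP => x; apply/implyP => xNm.
apply/negP => xm_chain; have := m_big (x |: m).
rewrite /ext xm_chain (subset_trans cm (subsetUr _ _)) cardsU1 xNm => /(_ isT).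
by rewrite /geq /= ltnn.
Qed.

End Chains.

Section GradedPoset.
Local Open Scope order_scope.
Context {disp : Order.disp_t} {P : finTBPOrderType disp}.
Variables (n : nat) (rk : P -> nat).
Hypothesis rk_graded : graded_rank rk n.
Implicit Types (c m : {set P}) (x y z : P).

Lemma rank_bot : rk \bot = 0%N. Proof. by case: rk_graded. Qed.
Lemma rank_top : rk \top = n. Proof. by case: rk_graded. Qed.

Lemma rank_cover x y : covers x y -> rk y = (rk x).+1.
Proof. by case: rk_graded => _ _; apply. Qed.

Lemma rank_lt x y : x < y -> (rk x < rk y)%N.
Proof.
pose between x y := [set z | x < z & z < y].
suff rank_lt_k k : forall x y, (#|between x y| < k)%N -> x < y -> (rk x < rk y)%N.
  exact: rank_lt_k.
elim: k => // k IH {}x {}y card_xy xy.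
case xy_cov: (covers x y); first by rewrite (rank_cover xy_cov).
move: xy_cov; rewrite /covers xy => /negbFE/existsP [z /andP [xz zy]].
have shrink u v : x <= u -> v <= y -> z \notin between u v ->
    (#|between u v| < k)%N.
  move=> xu vy zNuv; rewrite -ltnS; apply: leq_trans card_xy; rewrite ltnS.
  apply/proper_card/properP; split; last by exists z; rewrite // inE xz zy.
  apply/subsetP => w; rewrite !inE => /andP [uw wv].
  by rewrite (le_lt_trans xu uw) (lt_le_trans wv vy).
have xz_small : (#|between x z| < k)%N by rewrite shrink ?lexx ?(ltW zy) // inE ltxx andbF.
have zy_small : (#|between z y| < k)%N by rewrite shrink ?lexx ?(ltW xz) // inE ltxx.
exact: ltn_trans (IH _ _ xz_small xz) (IH _ _ zy_small zy).
Qed.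

Lemma rank_le x y : x <= y -> (rk x <= rk y)%N.
Proof. by rewrite le_eqVlt => /predU1P [-> // | /rank_lt /ltnW]. Qed.

Lemma rank_le_top x : (rk x <= n)%N.
Proof. by rewrite -rank_top rank_le ?lex1. Qed.

Lemma chain_rank_inj c : chainb c -> {in c &, injective rk}.
Proof.
move=> /chainP c_chain x y xc yc rxy.
by case/orP: (c_chain x y xc yc); rewrite le_eqVlt => /predU1P [// | /rank_lt];
  rewrite rxy ltnn.
Qed.

Lemma chain_le_rank c x y :
  chainb c -> x \in c -> y \in c -> (rk x <= rk y)%N -> x <= y.
Proof.
move=> /chainP c_chain xc yc rxy; case/orP: (c_chain x y xc yc) => // yx.
by move: yx; rewrite le_eqVlt => /predU1P [-> // | /rank_lt]; rewrite ltnNge rxy.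
Qed.

Lemma maxchain_cover m x y : maxchainb m -> x \in m -> y \in m -> x < y ->
  {in m, forall w, x < w -> y <= w} -> covers x y.
Proof.
move=> m_max xm ym xy y_least; rewrite /covers xy; apply/existsP => -[z /andP [xz zy]].
have m_chain := maxchain_chain m_max.
suff zm : z \in m by have := lt_le_trans zy (y_least z zm xz); rewrite ltxx.
apply: maxchain_mem => // w wm; case/orP: (chainP _ m_chain x w xm wm) => [xw | wx].
  move: xw; rewrite le_eqVlt => /predU1P [<- | xw]; first by rewrite (ltW xz) orbT.
  by rewrite (le_trans (ltW zy) (y_least w wm xw)).
by rewrite (le_trans wx (ltW xz)) orbT.
Qed.

Lemma maxchain_has_rank m r : maxchainb m -> (r <= n)%N -> exists2 x, x \in m & rk x = r.
Proof.
move=> m_max; have m_chain := maxchain_chain m_max.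
elim: r => [|r IH] r_le; first by exists \bot; rewrite ?maxchain_bot ?rank_bot.
have [x xm rx] := IH (ltnW r_le).
have x_top : x < \top.
  by rewrite lt_neqAle lex1 andbT; apply: contraTneq r_le => xt; rewrite -rx xt rank_top ltnn.
have [y /andP [ym xy] y_min] := @arg_minnP _ \top (fun y => (y \in m) && (x < y)) rk
  (introT andP (conj (maxchain_top m_max) x_top)).
exists y; rewrite // -rx; apply: rank_cover; apply: (maxchain_cover m_max) => // w wm xw.
by apply: (chain_le_rank m_chain ym wm); apply: y_min; rewrite wm xw.
Qed.

(* [\bot] is a junk value, only returned when [m] has no element of rank [r]. *)
Definition chain_at m r := odflt \bot [pick x in m | rk x == r].

Lemma chain_atP m r : maxchainb m -> (r <= n)%N ->
  chain_at m r \in m /\ rk (chain_at m r) = r.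
Proof.
move=> m_max r_le; rewrite /chain_at; case: pickP => [x /andP [xm /eqP ->] // | none].
by have [x xm rx] := maxchain_has_rank m_max r_le; move: (none x); rewrite xm rx eqxx.
Qed.

Lemma chain_at_rank m x : maxchainb m -> x \in m -> chain_at m (rk x) = x.
Proof.
move=> m_max xm; have [atm at_rk] := chain_atP m_max (rank_le_top x).
exact: (chain_rank_inj (maxchain_chain m_max)) atm xm at_rk.
Qed.

End GradedPoset.

Section HeckeWords.
Context {disp : Order.disp_t} {P : finTBPOrderType disp}.
Variables (n : nat) (D : pred {set P}) (U : nat -> {set P} -> {set P}).
Let letter i := (0 < i < n)%N.
Hypothesis U_stable : forall i m, letter i -> D m -> D (U i m).
Hypothesis U_idem : forall i m, letter i -> D m -> U i (U i m) = U i m.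
Hypothesis U_comm : forall i j m, letter i -> letter j ->
  (i.+2 <= j)%N || (j.+2 <= i)%N -> D m -> U i (U j m) = U j (U i m).
Hypothesis U_braid : forall i m, (0 < i)%N -> (i.+1 < n)%N -> D m ->
  U i (U i.+1 (U i m)) = U i.+1 (U i (U i.+1 m)).

Lemma Uword_cat w1 w2 m : Uword U (w1 ++ w2) m = Uword U w1 (Uword U w2 m).
Proof. by elim: w1 => //= i w1 ->. Qed.

Lemma Uword_stable w m : all letter w -> D m -> D (Uword U w m).
Proof. by elim: w => //= i w IH /andP [iw ww] Dm; apply: U_stable (IH ww Dm). Qed.

Lemma Uword_comm j w m : letter j ->
  all (fun i => letter i && ((j.+2 <= i)%N || (i.+2 <= j)%N)) w -> D m ->
  U j (Uword U w m) = Uword U w (U j m).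
Proof.
move=> j_letter; elim: w => //= i w IH /andP [/andP [i_letter far] ww] Dm.
rewrite -IH // U_comm //; apply: Uword_stable Dm.
by apply/allP => l /(allP ww) /andP [].
Qed.

Lemma all_letter_iota a l : (0 < a)%N -> (a + l <= n)%N -> all letter (iota a l).
Proof. by move=> a_pos al_le; apply/allP => i; rewrite mem_iota /letter; lia. Qed.

(* [Uword U (iota a l)] is [U_a U_(a+1) ... U_(a+l-1)], the rightmost map acting
   first. *)
Lemma Uword_iota_shift l a i m : (0 < a)%N -> (a + l <= n)%N -> (a < i < a + l)%N ->
  D m -> U i (Uword U (iota a l) m) = Uword U (iota a l) (U i.-1 m).
Proof.
elim: l a => [|l IH] a a_pos al_le ai Dm; first by lia.
have i_letter : letter i by rewrite /letter; lia.
have a_letter : letter a by rewrite /letter; lia.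
have Dtail : D (Uword U (iota a.+1 l) m) by apply/Uword_stable/Dm/all_letter_iota; lia.
rewrite /=; case: (ltngtP i a.+1) => [|i_far|->]; first by lia.
  by rewrite U_comm ?i_far ?orbT // IH //; lia.
case: l IH al_le ai Dtail => [|l] IH al_le ai Dtail; first by lia.
have Dtail' : D (Uword U (iota a.+2 l) m) by apply/Uword_stable/Dm/all_letter_iota; lia.
rewrite /= -U_braid //; last by lia.
rewrite Uword_comm //; apply/allP => j; rewrite mem_iota /letter; lia.
Qed.

Lemma Uword_iota_absorb l a m : (0 < a)%N -> (a + l.+1 <= n)%N -> D m ->
  U a (Uword U (iota a l.+1) m) = Uword U (iota a l.+1) m.
Proof.
move=> a_pos al_le Dm; rewrite /= U_idem //; first by rewrite /letter; lia.
by apply/Uword_stable/Dm/all_letter_iota; lia.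
Qed.

Section ParabolicWord.
Variable J : pred nat.
Hypothesis J_letter : forall j, J j -> letter j.

Fixpoint run_start k := if k is k'.+1 then (if J k' then run_start k' else k) else 0.

(* A word for the longest element of the parabolic subgroup generated by
   [J \cap [1, k]]: for each run [[a, b]] of [J] the words [a .. c] for
   [c = a, ..., b] are concatenated. *)
Fixpoint parabolic_word k := if k is k'.+1 then
  (if J k then iota (run_start k) (k.+1 - run_start k) ++ parabolic_word k'
   else parabolic_word k') else [::].

Lemma run_startP k : J k -> [/\ (0 < run_start k <= k)%N,
  (forall i, (run_start k <= i <= k)%N -> J i) & ~~ J (run_start k).-1].
Proof.
elim: k => [|k IH] Jk; first by have := J_letter Jk; rewrite /letter.
rewrite /=; case Jk': (J k); last first.
  split; rewrite ?Jk' ?leqnn //.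
  by move=> i i_in; have -> : i = k.+1 by lia.
have [start_le run_J start_notJ] := IH Jk'; split=> // [|i i_in]; first by lia.
by case: (ltngtP i k.+1) => [lt_ik | | ->] //; [apply: run_J; lia | lia].
Qed.

Lemma parabolic_wordS k : parabolic_word k.+1 =
  if J k.+1 then iota (run_start k.+1) (k.+2 - run_start k.+1) ++ parabolic_word k
  else parabolic_word k.
Proof. by []. Qed.

Lemma parabolic_word_J k : all J (parabolic_word k).
Proof.
elim: k => // k IH; rewrite parabolic_wordS; case Jk: (J k.+1) => //.
rewrite all_cat IH andbT.
have [start_le run_J _] := run_startP Jk.
by apply/allP => i; rewrite mem_iota => i_in; apply: run_J; lia.
Qed.

Lemma parabolic_word_letter k : all letter (parabolic_word k).
Proof. by apply/allP => i /(allP (parabolic_word_J k)) /J_letter. Qed.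

Lemma mem_parabolic_word k j : J j -> (j <= k)%N -> j \in parabolic_word k.
Proof.
elim: k => [|k IH] Jj j_le; first by have := J_letter Jj; rewrite /letter; lia.
rewrite parabolic_wordS; case: (ltngtP j k.+1) => [lt_jk | | eq_jk]; [| lia |].
  by case: (J k.+1); rewrite ?mem_cat IH ?orbT.
have [start_le _ _] := run_startP Jj.
by rewrite -eq_jk Jj mem_cat mem_iota; apply/orP; left; lia.
Qed.

(* [U_i] commutes past the run [[a, k]] when [i < a - 1], is absorbed by
   idempotence when [i = a], and turns into [U_(i-1)] when [a < i]; in the
   first and last cases the earlier runs absorb it. *)
Lemma parabolic_word_absorb k i m : J i -> (i <= k)%N -> D m ->
  U i (Uword U (parabolic_word k) m) = Uword U (parabolic_word k) m.
Proof.
elim: k i m => [|k IH] i m Ji i_le Dm; first by have := J_letter Ji; rewrite /letter; lia.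
rewrite parabolic_wordS; case Jk: (J k.+1); last first.
  apply: IH => //; case: (ltngtP i k.+1) => [||eq_ik]; try lia.
  by rewrite -eq_ik Ji in Jk.
have [start_le run_J start_notJ] := run_startP Jk.
set a := run_start k.+1 in start_le run_J start_notJ *.
have k_lt : (k.+1 < n)%N by case/andP: (J_letter Jk).
have Dw : D (Uword U (parabolic_word k) m) by apply/Uword_stable/Dm/parabolic_word_letter.
rewrite Uword_cat; case: (ltngtP i a) => [lt_ia | gt_ia | ->].
- have far : (i.+2 <= a)%N.
    by rewrite ltn_neqAle lt_ia andbT; apply: contraNneq start_notJ => <-.
  rewrite Uword_comm ?IH //; try lia; first exact: J_letter.
  by apply/allP => j; rewrite mem_iota /letter; lia.
- rewrite Uword_iota_shift ?IH //; try lia.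
  by apply: run_J; lia.
- have -> : (k.+2 - a = (k.+1 - a).+1)%N by lia.
  by apply: Uword_iota_absorb; lia.
Qed.

End ParabolicWord.
End HeckeWords.

Section Compositions.
Variable n : nat.
Implicit Types (R V : {set 'I_n}) (i j : 'I_n).

Definition nbelow R (k : nat) := #|[set r in R | (val r <= k)%N]|.
Definition in_nat R (k : nat) := [exists r in R, val r == k].

(* For [R \subset posI n]: the composition of [n] whose set of partial sums is
   [R], with parts the fibres of [nbelow R]. *)
Definition comp_of R : seq nat :=
  [seq #|[set j : 'I_n | nbelow R j == v]| | v <- iota 0 #|R|.+1].

Lemma size_comp_of R : size (comp_of R) = #|R|.+1.
Proof. by rewrite size_map size_iota. Qed.

Lemma nth_comp_of R v : (v < #|R|.+1)%N ->
  nth 0 (comp_of R) v = #|[set j : 'I_n | nbelow R j == v]|.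
Proof. by move=> v_lt; rewrite (nth_map 0) ?size_iota ?nth_iota. Qed.

Lemma nbelow_le_card R k : (nbelow R k <= #|R|)%N.
Proof. by apply: subset_leq_card; apply/subsetP => r; rewrite inE => /andP []. Qed.

Lemma nbelow_homo R : {homo nbelow R : k l / (k <= l)%N >-> (k <= l)%N}.
Proof.
move=> k l kl; apply: subset_leq_card; apply/subsetP => r.
by rewrite !inE => /andP [-> rk]; apply: leq_trans kl.
Qed.

Lemma in_nat_val R j : in_nat R j = (j \in R).
Proof.
apply/existsP/idP => [[r /andP [rR /eqP rj]] | jR]; last by exists j; rewrite jR eqxx.
by rewrite (_ : j = r) //; apply: val_inj.
Qed.

Lemma nbelowS R k : nbelow R k.+1 = (nbelow R k + in_nat R k.+1)%N.
Proof.
rewrite /nbelow /in_nat; case: existsP => [[r /andP [rR /eqP rk]] | no_r].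
  have -> : [set x in R | (val x <= k.+1)%N] = r |: [set x in R | (val x <= k)%N].
    apply/setP => x; rewrite !inE leq_eqVlt ltnS -rk (inj_eq val_inj).
    by case: (eqVneq x r) => [-> | //]; rewrite rR.
  by rewrite cardsU1 inE rk ltnn andbF addn1.
rewrite addn0; apply: eq_card => x; rewrite !inE leq_eqVlt ltnS.
case: (eqVneq (val x) k.+1) => [xk | //].
by case xR: (x \in R) => //; exfalso; apply: no_r; exists x; rewrite xR; apply/eqP.
Qed.

Lemma nbelow0 R : R \subset posI n -> nbelow R 0 = 0.
Proof.
move=> /subsetP R_pos; apply/eqP; rewrite cards_eq0; apply/eqP/setP => r.
by rewrite !inE leqn0; case rR: (r \in R) => //=; move: (R_pos r rR); rewrite inE lt0n => /negbTE.
Qed.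

Lemma nbelow_last R : nbelow R n.-1 = #|R|.
Proof.
by apply: eq_card => r; rewrite !inE -ltnS prednK ?ltn_ord ?andbT // (leq_ltn_trans _ (ltn_ord r)).
Qed.

Lemma last_comp_of_neq0 R : (0 < n)%N -> last 1%N (comp_of R) != 0%N.
Proof.
move=> n_pos; rewrite -nth_last size_comp_of /= (set_nth_default 0) ?size_comp_of //.
rewrite nth_comp_of // -lt0n.
have last_lt : (n.-1 < n)%N by rewrite ltn_predL.
by apply/card_gt0P; exists (Ordinal last_lt); rewrite inE nbelow_last.
Qed.

Lemma card_ltn_ord k : (k <= n)%N -> #|[set j : 'I_n | (val j < k)%N]| = k.
Proof.
elim: k => [|k IH] k_le; first by apply/eqP; rewrite cards_eq0; apply/eqP/setP => j; rewrite !inE.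
have -> : [set j : 'I_n | (val j < k.+1)%N] = Ordinal k_le |: [set j | (val j < k)%N].
  by apply/setP => j; rewrite !inE ltnS leq_eqVlt -val_eqE.
by rewrite cardsU1 inE ltnn (IH (ltnW k_le)).
Qed.

Section MonotoneMaps.
Variable g : 'I_n -> nat.
Hypothesis g_homo : {homo g : i j / (i <= j)%N >-> (i <= j)%N}.

Lemma homo_ltn_card j v : (g j < v)%N = (j < #|[set i | (g i < v)%N]|)%N.
Proof.
apply/idP/idP => [gj_lt | ].
  rewrite -ltnS -(card_ltn_ord (ltn_ord j)) ltnS; apply: subset_leq_card.
  by apply/subsetP => i; rewrite !inE ltnS => ij; apply: leq_ltn_trans (g_homo ij) gj_lt.
apply: contraTT; rewrite -!leqNgt => v_le; rewrite -(card_ltn_ord (ltnW (ltn_ord j))).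
apply: subset_leq_card; apply/subsetP => i; rewrite !inE; apply: contraTT.
by rewrite -!leqNgt => ji; apply: leq_trans v_le (g_homo ji).
Qed.

Lemma card_ltnS v :
  #|[set j | (g j < v.+1)%N]| = (#|[set j | (g j < v)%N]| + #|[set j | g j == v]|)%N.
Proof.
rewrite -cardsUI (_ : _ :&: _ = set0) ?cards0 ?addn0; last first.
  by apply/setP => j; rewrite !inE; case: ltngtP.
by apply: eq_card => j; rewrite !inE ltnS leq_eqVlt orbC.
Qed.

End MonotoneMaps.

Lemma homo_fibres_eq (f g : 'I_n -> nat) :
  {homo f : i j / (i <= j)%N >-> (i <= j)%N} ->
  {homo g : i j / (i <= j)%N >-> (i <= j)%N} ->
  (forall v, #|[set j | f j == v]| = #|[set j | g j == v]|) -> f =1 g.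
Proof.
move=> f_homo g_homo fibres j.
have below v : #|[set j | (f j < v)%N]| = #|[set j | (g j < v)%N]|.
  elim: v => [|v IH]; first by apply: eq_card => i; rewrite !inE.
  by rewrite !card_ltnS // IH fibres.
have lt_eq v : (f j < v)%N = (g j < v)%N.
  by rewrite (homo_ltn_card f_homo) (homo_ltn_card g_homo) below.
apply/eqP; rewrite eqn_leq -[(f j <= g j)%N]ltnS lt_eq ltnS leqnn /=.
by rewrite -[(g j <= f j)%N]ltnS -lt_eq ltnS.
Qed.

End Compositions.

Lemma card_subset1 (T : finType) (A : {set T}) x : A \subset [set x] -> #|A| = (x \in A).
Proof. by rewrite subset1 => /orP [] /eqP ->; rewrite ?cards1 ?set11 ?cards0 ?inE. Qed.

(* The only weakly increasing map with fibre sizes [comp_of R] is [nbelow R],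
   which increases strictly exactly at the elements of [R]. *)
Lemma L_coef_comp_of (n : nat) (V R : {set 'I_n}) :
  V \subset posI n -> L_coef V (comp_of R) = (V \subset R).
Proof.
move=> V_pos.
have nbelow_lt (j : 'I_n) : (nbelow R j < size (comp_of R))%N.
  by rewrite size_comp_of ltnS nbelow_le_card.
pose f0 : {ffun 'I_n -> 'I_(size (comp_of R))} := [ffun j => Ordinal (nbelow_lt j)].
rewrite /L_coef; set A := (X in #|X|).
have A_f0 f : f \in A -> f = f0.
  rewrite inE => /and3P [/forallP f_homo _ /forallP f_fibres].
  suff f_eq : (fun j => val (f j)) =1 (fun j : 'I_n => nbelow R j).
    by apply/ffunP => j; apply: val_inj; rewrite ffunE f_eq.
  apply: homo_fibres_eq => [i k ik | i k | v].
  - by move/forallP: (f_homo i) => /(_ k) /implyP; apply.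
  - exact: nbelow_homo.
  have [v_lt | v_ge] := ltnP v (size (comp_of R)).
    have := f_fibres (Ordinal v_lt); rewrite nth_comp_of -?size_comp_of // => /eqP <-.
    by apply: eq_card => j; rewrite !inE.
  have no_fibre (h : 'I_n -> nat) : (forall j, h j < size (comp_of R))%N ->
      [set j | h j == v] = set0.
    move=> h_lt; apply/setP => j; rewrite !inE.
    by apply: contraTF v_ge => /eqP <-; rewrite -ltnNge.
  by rewrite (no_fibre _ (fun j => ltn_ord (f j))) (no_fibre _ nbelow_lt).
have f0_A : (f0 \in A) = (V \subset R).
  rewrite inE; apply/idP/idP => [/and3P [_ /forallP f0_strict _] | VR].
    apply/subsetP => j jV.
    have j_pos : (0 < j)%N by move: (subsetP V_pos j jV); rewrite inE.
    have pj_lt : (j.-1 < n)%N by rewrite (leq_ltn_trans (leq_pred j)).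
    move/forallP: (f0_strict (Ordinal pj_lt)) => /(_ j).
    rewrite jV /= prednK // eqxx /= !ffunE /= -{2}(prednK j_pos) nbelowS prednK //.
    by rewrite in_nat_val; case: (j \in R); rewrite ?addn0 ?ltnn.
  apply/and3P; split; apply/forallP => i; last first.
  - apply/eqP; rewrite nth_comp_of -?size_comp_of //.
    by apply: eq_card => j; rewrite !inE ffunE.
  - apply/forallP => j; apply/implyP => /andP [/eqP ij jV].
    by rewrite !ffunE /= ij nbelowS -ij in_nat_val (subsetP VR j jV) addn1.
  - by apply/forallP => j; apply/implyP => ij; rewrite !ffunE nbelow_homo.
by rewrite -f0_A; apply: card_subset1; apply/subsetP => f /A_f0 ->; rewrite set11.
Qed.

Lemma mulr_L_coef_comp_of (n : nat) (x : int) (V R : {set 'I_n}) :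
  V \subset posI n -> (x * Posz (L_coef V (comp_of R)) = x *+ (V \subset R))%R.
Proof. by move=> V_pos; rewrite L_coef_comp_of // -natz mulr_natr. Qed.

Section PartialSums.
Variables (n : nat) (R : {set 'I_n}).

(* The [i]-th partial sum of [comp_of R], i.e. the [i]-th smallest element of
   [{0} \cup R \cup {n}]. *)
Definition psum i := #|[set j : 'I_n | (nbelow R j < i)%N]|.

Lemma psum0 : psum 0 = 0.
Proof. by apply/eqP; rewrite cards_eq0; apply/eqP/setP => j; rewrite !inE. Qed.

Lemma psumS i : (i < size (comp_of R))%N -> psum i.+1 = (psum i + nth 0 (comp_of R) i)%N.
Proof.
by rewrite size_comp_of => i_lt; rewrite /psum card_ltnS ?nth_comp_of //; apply: nbelow_homo.
Qed.

Lemma psum_le i : (psum i <= n)%N.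
Proof. by rewrite -[X in (_ <= X)%N]card_ord max_card. Qed.

Lemma psum_top : psum #|R|.+1 = n.
Proof.
by rewrite /psum -[RHS]card_ord; apply: eq_card => j; rewrite !inE ltnS nbelow_le_card.
Qed.

Lemma psum_homo : {homo psum : i k / (i <= k)%N}.
Proof.
move=> i k ik; apply: subset_leq_card; apply/subsetP => j; rewrite !inE => j_lt.
exact: leq_trans j_lt ik.
Qed.

Hypothesis n_pos : (0 < n)%N.

Lemma psum_lt i : (i <= #|R|)%N -> (psum i < n)%N.
Proof.
move=> i_le; have last_lt : (n.-1 < n)%N by rewrite ltn_predL.
have := homo_ltn_card (nbelow_homo R) (Ordinal last_lt) i.
rewrite /= nbelow_last ltnNge i_le -/(psum i) => /esym/negbT.
by rewrite -leqNgt => /leq_ltn_trans; apply.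
Qed.

Hypothesis R_pos : R \subset posI n.

Lemma psum_mem i : (0 < i <= #|R|)%N -> exists2 r, r \in R & val r = psum i.
Proof.
case/andP => i_pos i_le; have q_lt := psum_lt i_le.
have at_psum (j : 'I_n) : (nbelow R j < i)%N = (j < psum i)%N.
  exact: homo_ltn_card (nbelow_homo R) j i.
have q_pos : (0 < psum i)%N by rewrite -(at_psum (Ordinal n_pos)) /= nbelow0.
have pq_lt : ((psum i).-1 < n)%N by rewrite (leq_ltn_trans (leq_pred _)).
move: (at_psum (Ordinal pq_lt)) (at_psum (Ordinal q_lt)) => /=.
rewrite ltnn ltn_predL q_pos => below_prev below_q.
case: (boolP (in_nat R (psum i))) => [/existsP [r /andP [rR /eqP]] | /negbTE not_in].
  by exists r.
suff same_below : nbelow R (psum i) = nbelow R (psum i).-1.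
  by rewrite same_below below_prev in below_q.
by rewrite -[in LHS](prednK q_pos) nbelowS prednK // not_in addn0.
Qed.

End PartialSums.

Section SubsetSums.
Variables (T : finType) (A : {set T}).
Implicit Types B C R : {set T}.
Local Open Scope ring_scope.

Lemma setD_setD_subset B : B \subset A -> A :\: (A :\: B) = B.
Proof. by move=> BA; rewrite setDDr setDv set0U; apply/setIidPr. Qed.

Lemma sum_subsets_setD (V : nmodType) (F : {set T} -> V) :
  \sum_(B : {set T} | B \subset A) F B = \sum_(B : {set T} | B \subset A) F (A :\: B).
Proof.
rewrite (reindex_onto (setD A) (setD A)) => [|B /setD_setD_subset //].
apply: eq_bigl => B; rewrite subsetDl /=.
case: (boolP (B \subset A)) => [/setD_setD_subset -> | BNA]; first exact/eqP.
by apply: contraNF BNA => /eqP <-; apply: subsetDl.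
Qed.

(* Injectivity of the zeta transform of the boolean lattice below [A]. *)
Lemma subset_sums_eq0 (V : nmodType) (e : {set T} -> V) :
  (forall B, B \subset A -> \sum_(C : {set T} | C \subset B) e C = 0) ->
  forall B, B \subset A -> e B = 0.
Proof.
move=> sums0 B; elim: {B}_.+1 {-2}B (ltnSn #|B|) => // k IH B B_lt BA.
have := sums0 B BA; rewrite (bigD1 B) //= big1 ?addr0 // => C /andP [CB C_neqB].
have CB_proper : C \proper B by rewrite properEneq C_neqB.
by apply: IH (subset_trans CB BA); apply: leq_trans (proper_card CB_proper) _.
Qed.

Lemma subset_coeffs_compl (V : zmodType) (c d : {set T} -> V) :
  (forall R, R \subset A ->
     \sum_(B : {set T} | B \subset A) d B *+ (A :\: B \subset R) =
     \sum_(B : {set T} | B \subset A) c B *+ (B \subset R)) ->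
  forall B, B \subset A -> c B = d (A :\: B).
Proof.
move=> sums_eq B BA; apply/eqP; rewrite eq_sym -subr_eq0; apply/eqP; move: B BA.
apply: subset_sums_eq0 => R RA; rewrite sumrB.
have restrict (F : {set T} -> V) :
    \sum_(B : {set T} | B \subset R) F B = \sum_(B : {set T} | B \subset A) F B *+ (B \subset R).
  rewrite big_mkcond [RHS]big_mkcond; apply: eq_bigr => B _.
  case: (boolP (B \subset R)) => [BR | _]; last by rewrite if_same.
  by rewrite (subset_trans BR RA).
rewrite !restrict -sums_eq //; apply/eqP; rewrite subr_eq0 [X in _ == X]sum_subsets_setD.
by apply/eqP/eq_bigr => B BA; rewrite setD_setD_subset.
Qed.

End SubsetSums.

Lemma setD_subset_setD (T : finType) (A B C : {set T}) :
  B \subset A -> C \subset A -> (A :\: B \subset A :\: C) = (C \subset B).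
Proof.
move=> BA CA; apply/idP/idP => [AB_AC | CB]; last by apply: setDS.
apply/subsetP => x xC; apply: contraT => xNB.
by have := subsetP AB_AC x; rewrite !inE xNB (subsetP CA x xC) xC => /(_ isT).
Qed.

Lemma prod_sign_indicator (R : pzRingType) (p : pred nat) (w : seq nat) :
  (\prod_(i <- w) (if p i then -1 else 0 : R) = if all p w then (-1) ^+ size w else 0)%R.
Proof.
elim: w => [|i w IH]; first by rewrite big_nil.
by rewrite big_cons IH /=; case: (p i); case: (all p w); rewrite ?mul0r ?mulr0 ?exprS.
Qed.

Lemma omega_coeffs (n : nat) (c d : {set 'I_n} -> int) : (0 < n)%N ->
  (forall a : seq nat, last 1%N a != 0%N ->
    (\sum_(T : {set 'I_n} | T \subset posI n) d T * Posz (L_coef (L_compl T) a))%R =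
    (\sum_(T : {set 'I_n} | T \subset posI n) c T * Posz (L_coef T a))%R) ->
  forall T : {set 'I_n}, T \subset posI n -> c T = d (posI n :\: T).
Proof.
move=> n_pos omega; apply: subset_coeffs_compl => R _.
have := omega _ (last_comp_of_neq0 R n_pos).
rewrite (eq_bigr _ (fun T _ => mulr_L_coef_comp_of (d T) _ (subsetDl _ T))).
by rewrite (eq_bigr _ (fun T T_pos => mulr_L_coef_comp_of (c T) _ T_pos)).
Qed.

Section DescentClasses.
Local Open Scope order_scope.
Context {disp : Order.disp_t} {P : finTBPOrderType disp}.
Variables (n : nat) (rk : P -> nat) (U : nat -> {set P} -> {set P}) (S : {set 'I_n}).
Hypothesis rk_graded : graded_rank rk n.
Hypothesis n_pos : (0 < n)%N.
Hypothesis S_pos : S \subset posI n.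
Hypothesis U_maxchain : forall i m, (0 < i < n)%N -> maxchainb m -> maxchainb (U i m).
Hypothesis U_local : forall i m x, (0 < i < n)%N -> maxchainb m -> rk x != i ->
  (x \in U i m) = (x \in m).
Hypothesis U_idem : forall i m, (0 < i < n)%N -> maxchainb m -> U i (U i m) = U i m.
Hypothesis U_comm : forall i j m, (0 < i < n)%N -> (0 < j < n)%N ->
  (i.+2 <= j)%N || (j.+2 <= i)%N -> maxchainb m -> U i (U j m) = U j (U i m).
Hypothesis U_braid : forall i m, (0 < i)%N -> (i.+1 < n)%N -> maxchainb m ->
  U i (U i.+1 (U i m)) = U i.+1 (U i (U i.+1 m)).

Definition nonS j := (0 < j < n)%N && ~~ in_nat S j.

Lemma nonS_letter j : nonS j -> (0 < j < n)%N.
Proof. by case/andP. Qed.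

Definition projS := Uword U (parabolic_word nonS n.-1).

Lemma projS_maxchain m : maxchainb m -> maxchainb (projS m).
Proof. by apply/(Uword_stable U_maxchain)/(parabolic_word_letter nonS_letter). Qed.

Lemma projS_fixed m j : maxchainb m -> nonS j -> U j (projS m) = projS m.
Proof.
move=> m_max j_nonS.
apply: (parabolic_word_absorb U_maxchain U_idem U_comm U_braid nonS_letter) => //.
by have := nonS_letter j_nonS; lia.
Qed.

Lemma projS_id m : (forall j, nonS j -> U j m = m) -> projS m = m.
Proof.
move=> fixed; rewrite /projS.
elim: (parabolic_word _ _) (parabolic_word_J nonS_letter n.-1) => //= i w IH.
by case/andP => i_nonS w_nonS; rewrite IH // fixed.
Qed.

Lemma projS_mem m x : maxchainb m -> ~~ nonS (rk x) -> (x \in projS m) = (x \in m).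
Proof.
rewrite /projS => m_max x_S; have := parabolic_word_J nonS_letter n.-1.
elim: (parabolic_word _ _) => //= i w IH /andP [i_nonS w_nonS].
rewrite U_local ?IH ?nonS_letter //; last by apply: contraNneq x_S => ->.
by apply: (Uword_stable U_maxchain _ m_max); apply/allP => j /(allP w_nonS) /nonS_letter.
Qed.

Lemma descents_subsetP m : reflect (forall j, nonS j -> U j m = m) (descents n U m \subset S).
Proof.
apply: (iffP subsetP) => [desc_S j /andP [/andP [j_pos j_lt] jNS] | fixed i].
  apply/eqP; apply: contraNT jNS => Ujm.
  by rewrite (in_nat_val S (Ordinal j_lt)) desc_S // inE j_pos.
rewrite inE => /andP [i_pos]; apply: contraNT => iNS.
by rewrite fixed ?eqxx // /nonS i_pos ltn_ord in_nat_val.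
Qed.

Definition descS_chains := [set m | maxchainb m & descents n U m \subset S].

Lemma projS_descS m : maxchainb m -> projS m \in descS_chains.
Proof.
move=> m_max; rewrite inE projS_maxchain //=.
by apply/descents_subsetP => j; apply: projS_fixed.
Qed.

Local Notation K := (size (comp_of S)).

Definition multichains (a : seq nat) := [set t : {ffun 'I_(size a).+1 -> P} |
  [&& 0 < size a, t ord0 == \bot, t ord_max == \top,
      [forall i : 'I_(size a),
         (t (widen_ord (leqnSn _) i) <= t (lift ord0 i)) &&
         (rk (t (lift ord0 i)) == rk (t (widen_ord (leqnSn _) i)) + nth 0 a i)%N] &
      (t (inord (size a).-1) < t ord_max)]].

Lemma F_coef_multichains a : F_coef rk a = #|multichains a|.
Proof. by []. Qed.

Lemma multichain_step t (i : nat) : t \in multichains (comp_of S) -> (i < K)%N ->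
  t (inord i) <= t (inord i.+1) /\
  rk (t (inord i.+1)) = (rk (t (inord i)) + nth 0 (comp_of S) i)%N.
Proof.
rewrite inE => /and5P [_ _ _ /forallP steps _] i_lt.
have lift_i : lift ord0 (Ordinal i_lt) = inord i.+1 by apply: val_inj; rewrite /= inordK.
have widen_i : widen_ord (leqnSn _) (Ordinal i_lt) = inord i.
  by apply: val_inj; rewrite /= inordK // ltnW.
by case/andP: (steps (Ordinal i_lt)); rewrite lift_i widen_i => le_step /eqP.
Qed.

Lemma multichain_rank t i : t \in multichains (comp_of S) -> (i < K.+1)%N ->
  rk (t (inord i)) = psum S i.
Proof.
move=> t_mc; elim: i => [|i IH] i_lt.
  rewrite (_ : inord 0 = ord0); last by apply: val_inj; rewrite /= inordK.
  by move: t_mc; rewrite inE psum0 => /and5P [_ /eqP -> _ _ _]; rewrite (rank_bot rk_graded).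
by rewrite (multichain_step t_mc i_lt).2 IH 1?ltnW // psumS.
Qed.

Lemma multichain_le t i j : t \in multichains (comp_of S) -> (i <= j)%N -> (j < K.+1)%N ->
  t (inord i) <= t (inord j).
Proof.
move=> t_mc; elim: j => [|j IH] ij j_lt; first by move: ij; rewrite leqn0 => /eqP ->.
case: (ltngtP i j.+1) ij => [ij _ | // | -> //]; rewrite ltnS in ij.
exact: le_trans (IH ij (ltnW j_lt)) (multichain_step t_mc j_lt).1.
Qed.

Definition restrictS (m : {set P}) : {ffun 'I_K.+1 -> P} :=
  [ffun i : 'I_K.+1 => chain_at rk m (psum S i)].

Lemma restrictS_multichain m : maxchainb m -> restrictS m \in multichains (comp_of S).
Proof.
move=> m_max; have m_chain := maxchain_chain m_max.
have at_psum k := chain_atP rk_graded m_max (psum_le S k).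
have at_n := chain_atP rk_graded m_max (leqnn n).
have maxK : nat_of_ord (ord_max : 'I_K.+1) = #|S|.+1 by exact: size_comp_of.
rewrite inE; apply/and5P; split; rewrite ?size_comp_of //.
- by rewrite ffunE psum0 -(rank_bot rk_graded) (chain_at_rank rk_graded) ?maxchain_bot.
- by rewrite ffunE maxK psum_top -(rank_top rk_graded) (chain_at_rank rk_graded) ?maxchain_top.
- apply/forallP => i; rewrite !ffunE /=; apply/andP; split.
    apply: (chain_le_rank rk_graded m_chain (at_psum _).1 (at_psum _).1).
    by rewrite (at_psum _).2 (at_psum _).2 psum_homo.
  by rewrite (at_psum _).2 (at_psum _).2 psumS.
- rewrite !ffunE maxK psum_top inordK size_comp_of //= lt_neqAle; apply/andP; split.
    apply/eqP => eq_n; have := psum_lt n_pos (leqnn #|S|).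
    by rewrite -(at_psum #|S|).2 eq_n at_n.2 ltnn.
  apply: (chain_le_rank rk_graded m_chain (at_psum _).1 at_n.1).
  by rewrite (at_psum _).2 at_n.2 psum_le.
Qed.

Lemma psum_notS k : (k <= #|S|.+1)%N -> ~~ nonS (psum S k).
Proof.
move=> k_le; rewrite /nonS negb_and; case: k k_le => [|k] k_le; first by rewrite psum0.
case: (ltngtP k #|S|) k_le => [k_lt _ | gt_k | ->].
- by have [r rS <-] := psum_mem n_pos S_pos (i := k.+1) k_lt; rewrite in_nat_val rS orbT.
- by rewrite ltnS leqNgt gt_k.
- by rewrite psum_top ltnn andbF.
Qed.

Lemma restrictS_surj t : t \in multichains (comp_of S) ->
  exists2 m, m \in descS_chains & restrictS m = t.
Proof.
move=> t_mc; set c := [set t i | i : 'I_K.+1].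
have c_chain : chainb c.
  apply/chainP => _ _ /imsetP [i _ ->] /imsetP [j _ ->].
  have t_le (k l : 'I_K.+1) : (k <= l)%N -> t k <= t l.
    by move=> kl; have := multichain_le t_mc kl (ltn_ord l); rewrite !inord_val.
  by case: (leqP i j) => [ij | /ltnW ji]; rewrite ?(t_le _ _ ij) ?(t_le _ _ ji) ?orbT.
have [m m_max cm] := maxchain_exists c_chain.
exists (projS m); first exact: projS_descS.
have proj_max := projS_maxchain m_max.
apply/ffunP => i; have := multichain_rank t_mc (ltn_ord i); rewrite inord_val => rk_ti.
rewrite ffunE -rk_ti (chain_at_rank rk_graded) // projS_mem ?(subsetP cm) ?imset_f //.
rewrite rk_ti psum_notS //.
by rewrite -size_comp_of -ltnS.
Qed.

Lemma descS_chains_maxchain m : m \in descS_chains -> maxchainb m.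
Proof. by rewrite inE => /andP []. Qed.

Lemma all_in_nat_parabolic_word T :
  all (in_nat T) (parabolic_word nonS n.-1) = (posI n :\: S \subset T).
Proof.
apply/allP/subsetP => [all_T j | sub_T i i_w].
  rewrite !inE -in_nat_val => /andP [jNS j_pos].
  have j_w : val j \in parabolic_word nonS n.-1.
    apply: (mem_parabolic_word nonS_letter); first by rewrite /nonS j_pos ltn_ord.
    by rewrite -ltnS prednK ?ltn_ord // (leq_ltn_trans _ (ltn_ord j)).
  by rewrite -in_nat_val all_T.
have /andP [/andP [i_pos i_lt] iNS] := allP (parabolic_word_J nonS_letter _) i i_w.
by rewrite (in_nat_val T (Ordinal i_lt)) sub_T // !inE -in_nat_val iNS.
Qed.

Lemma rankset_notS c x : rankset n rk c = S -> x \in c -> ~~ nonS (rk x).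
Proof.
move=> c_ranks xc; rewrite /nonS negb_and negbK.
case: (eqVneq x \bot) => [-> | x_bot]; first by rewrite (rank_bot rk_graded).
case: (eqVneq x \top) => [-> | x_top]; first by rewrite (rank_top rk_graded) ltnn andbF.
have x_lt : (rk x < n)%N.
  by rewrite -(rank_top rk_graded) (rank_lt rk_graded) // lt_neqAle x_top lex1.
rewrite (in_nat_val S (Ordinal x_lt)) -c_ranks inE; apply/orP; right.
by apply/existsP; exists x; rewrite xc x_bot x_top /=.
Qed.

Lemma restrictS_rankset c m1 m2 : rankset n rk c = S -> maxchainb m1 -> maxchainb m2 ->
  c \subset m1 -> c \subset m2 -> restrictS m1 = restrictS m2.
Proof.
move=> c_ranks m1_max m2_max cm1 cm2; apply/ffunP => i; rewrite !ffunE.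
suff [x [xm1 xm2 <-]] : exists x, [/\ x \in m1, x \in m2 & rk x = psum S i].
  by rewrite !(chain_at_rank rk_graded).
have i_le : (i <= #|S|.+1)%N by rewrite -size_comp_of -ltnS.
case: (posnP i) => [-> | i_pos].
  by exists \bot; rewrite !maxchain_bot // psum0 (rank_bot rk_graded).
case: (ltngtP i #|S|.+1) i_le => [i_lt _ | // | ->]; last first.
  by exists \top; rewrite !maxchain_top // psum_top (rank_top rk_graded).
have [r rS <-] := psum_mem n_pos S_pos (i := i) (introT andP (conj i_pos i_lt)).
move: rS; rewrite -c_ranks inE => /existsP [x /and4P [xc _ _ /eqP <-]].
by exists x; rewrite (subsetP cm1 x xc) (subsetP cm2 x xc).
Qed.

Section Counting.
Variables (c d : {set 'I_n} -> int).
Hypothesis chiP_expansion : forall w : seq nat, all (fun i => (0 < i < n)%N) w ->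
  chiP U w = (\sum_(T : {set 'I_n} | T \subset posI n) c T * chiS T w)%R.
Hypothesis F_expansion : forall a : seq nat, last 1%N a != 0%N ->
  Posz (F_coef rk a) = (\sum_(T : {set 'I_n} | T \subset posI n) d T * Posz (L_coef T a))%R.
Hypothesis omega_F : forall a : seq nat, last 1%N a != 0%N ->
  (\sum_(T : {set 'I_n} | T \subset posI n) d T * Posz (L_coef (L_compl T) a))%R =
  (\sum_(T : {set 'I_n} | T \subset posI n) c T * Posz (L_coef T a))%R.

(* The trace of the idempotent [projS] on [C M(P)] counts [descS_chains]. *)
Lemma card_descS_chains_coeffs :
  Posz #|descS_chains| =
  (\sum_(T : {set 'I_n} | T \subset posI n) c T *+ (posI n :\: S \subset T))%R.
Proof.
set w := parabolic_word nonS n.-1.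
have fixed_descS : [set m in maxchains | Uword U w m == m] = descS_chains.
  apply/setP => m; rewrite !inE; case m_max: (maxchainb m) => //=.
  apply/eqP/descents_subsetP => [<- j | fixed]; first exact: projS_fixed.
  exact: projS_id.
have := chiP_expansion (parabolic_word_letter nonS_letter n.-1).
rewrite /chiP -/w fixed_descS.
under eq_bigr => T _ do rewrite /chiS prod_sign_indicator all_in_nat_parabolic_word.
move/(canRL (signrMK _)); rewrite mulr_sumr => ->; apply: eq_bigr => T _.
by case: (_ \subset _); rewrite ?mulr0 // mulrCA -exprMn mulrNN mulr1 expr1n mulr1.
Qed.

Lemma card_descS_chains : #|descS_chains| = #|multichains (comp_of S)|.
Proof.
apply/eqP; rewrite -eqz_nat -F_coef_multichains; apply/eqP.
rewrite F_expansion ?last_comp_of_neq0 // card_descS_chains_coeffs.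
rewrite (eq_bigr (fun T => d (posI n :\: T) *+ (posI n :\: S \subset T))%R); last first.
  by move=> T T_pos; rewrite (omega_coeffs n_pos omega_F).
rewrite sum_subsets_setD; apply: eq_bigr => T T_pos.
by rewrite setD_setD_subset // setD_subset_setD // mulr_L_coef_comp_of.
Qed.

Lemma restrictS_inj : {in descS_chains &, injective restrictS}.
Proof.
apply/imset_injP; rewrite card_descS_chains; apply/eqP/eq_card => t.
apply/imsetP/idP => [[m m_S ->] | /restrictS_surj [m m_S <-]]; last by exists m.
exact/restrictS_multichain/descS_chains_maxchain.
Qed.

Lemma descS_chains_unique_extension ch : chainb ch -> rankset n rk ch = S ->
  exists! m, [/\ maxchainb m, ch \subset m & descents n U m \subset S].
Proof.
move=> ch_chain ch_ranks; have [m0 m0_max chm0] := maxchain_exists ch_chain.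
have proj_S := projS_descS m0_max.
have ch_proj : ch \subset projS m0.
  by apply/subsetP => x xch; rewrite projS_mem ?(subsetP chm0) ?(rankset_notS ch_ranks).
exists (projS m0); split.
  by move: proj_S; rewrite inE => /andP [proj_max proj_desc]; split.
move=> m [m_max chm m_desc]; have m_S : m \in descS_chains by rewrite inE m_max.
by apply: restrictS_inj => //; apply: (restrictS_rankset ch_ranks) => //; exact: projS_maxchain.
Qed.

End Counting.
End DescentClasses.

Lemma maxchain_rank0 (disp : Order.disp_t) (P : finTBPOrderType disp) (rk : P -> nat)
  (m1 m2 : {set P}) : graded_rank rk 0 -> maxchainb m1 -> maxchainb m2 -> m1 = m2.
Proof.
move=> rk_graded m1_max m2_max.
have all_bot (x : P) : x = \bot%O.
  apply/eqP; apply: contraT => x_bot; have := rank_le_top rk_graded x.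
  rewrite leqn0 -(rank_bot rk_graded) => /eqP rk_x.
  by have := rank_lt rk_graded (x := \bot%O) (y := x); rewrite lt0x x_bot rk_x ltnn => /(_ isT).
by apply/setP => x; rewrite (all_bot x) !maxchain_bot.
Qed.

Theorem mainTheorem14 (disp : Order.disp_t) (P : finTBPOrderType disp)
  (n : nat) (rk : P -> nat) (U : nat -> {set P} -> {set P})
  (Hgr : graded_rank rk n) (Hbt : bowtie_free (P := P))
  (Hgood : good_action n rk U) (S : {set 'I_n}) (HS : S \subset posI n) :
  forall c : {set P}, chainb c -> rankset n rk c = S ->
    exists! m : {set P},
      [/\ maxchainb m, c \subset m & descents n U m \subset S].
Proof.
move=> c c_chain c_ranks.
have [[U_maxchain U_local U_idem U_comm U_braid] [cf [df [chi_exp F_exp omega_F]]]] := Hgood.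
have [n0 | n_pos] := posnP n; last first.
  exact: (descS_chains_unique_extension Hgr n_pos HS U_maxchain U_local U_idem U_comm U_braid
            chi_exp F_exp omega_F).
subst n; have [m m_max cm] := maxchain_exists c_chain.
exists m; split=> [|m' [m'_max _ _]]; last exact: maxchain_rank0 Hgr m_max m'_max.
by split=> //; apply/subsetP => -[].
Qed.
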